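(* Let $k$ be a field and $V$ a $k$-vector space of dimension $n>1$. Define $b:(k\oplus V)\times(k\oplus V)\to V$ by $b(\alpha\oplus u,\beta\oplus v)=\alpha v-\beta u$. Then $b$ is alternating and $$\operatorname{Adj}(b)\cong\left\{\begin{bmatrix}\alpha1_k & h\\ 0 & \beta 1_V\end{bmatrix}: h\in\hom(k,V),\ \alpha,\beta\in k\right\},$$ acting on $k\oplus V$ by matrix multiplication, with involution $\begin{bmatrix}\alpha1_k & h\\ 0&\beta1_V\end{bmatrix}^*=\begin{bmatrix}\beta1_k&-h\\0&\alpha1_V\end{bmatrix}$. In particular the Jacobson radical of $\operatorname{Adj}(b)$ is $\left\{\begin{bmatrix}0&h\\0&0\end{bmatrix}:h\in\hom(k,V)\right\}$, $\operatorname{Adj}(b)/\operatorname{rad}\operatorname{Adj}(b)\cong k\oplus k$ with the exchange involution $(x,y)\mapsto(y,x)$, and $b$ is $\perp$-indecomposable (of exchange type).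
   Context: $\operatorname{Adj}(b)$ is the set of $f\in\operatorname{End}(k\oplus V)$ for which there is $f^*$ with $b(uf,v)=b(u,vf^* )$ for all $u,v$, with involution $f\mapsto f^*$. $b$ is $\perp$-indecomposable if $k\oplus V$ has no decomposition into a set $\mathcal{X}\neq\{k\oplus V\}$ of pairwise $b$-orthogonal subspaces generating the space with no proper subset generating it. *)

From HB Require Import structures.
From mathcomp Require Import all_boot all_order all_algebra.
Set Implicit Arguments. Unset Strict Implicit. Unset Printing Implicit Defensive.
Import GRing.Theory.
Local Open Scope ring_scope.

(* Conventions: V = 'rV[k]_n (an n-dimensional k-space), k (+) V = 'rV[k]_(1 + n).
   Endomorphisms of a row space 'rV_m are matrices 'M_m acting on the RIGHT
   (u f := u *m f), matching the paper's notation b(uf, v) = b(u, v f^* ). *)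

Section Defs.
Variable k : fieldType.

Definition bmap (n : nat) (x y : 'rV[k]_(1 + n)) : 'rV[k]_n :=
  (lsubmx x) 0 0 *: rsubmx y - (lsubmx y) 0 0 *: rsubmx x.

Definition alternating (m : nat) (W : zmodType) (b : 'rV[k]_m -> 'rV[k]_m -> W) :=
  forall u, b u u = 0.

Definition adjoint_pair (m : nat) (W : zmodType) (b : 'rV[k]_m -> 'rV[k]_m -> W)
  (f g : 'M[k]_m) := forall u v, b (u *m f) v = b u (v *m g).

Definition Adj (m : nat) (W : zmodType) (b : 'rV[k]_m -> 'rV[k]_m -> W)
  (f : 'M[k]_m) : Prop := exists g, adjoint_pair b f g.

Definition left_ideal (m : nat) (A I : 'M[k]_m -> Prop) :=
  [/\ forall x, I x -> A x,
      I 0,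
      forall x y, I x -> I y -> I (x - y) &
      forall a x, A a -> I x -> I (a *m x)].

Definition maximal_left_ideal (m : nat) (A I : 'M[k]_m -> Prop) :=
  [/\ left_ideal A I, ~ I 1%:M &
      forall J, left_ideal A J -> ~ J 1%:M -> (forall x, I x -> J x) ->
        forall x, J x -> I x].

Definition jacobson_rad (m : nat) (A : 'M[k]_m -> Prop) (x : 'M[k]_m) : Prop :=
  A x /\ forall I, maximal_left_ideal A I -> I x.

Definition generates (vT : vectType k) (X : {vspace vT} -> Prop) :=
  forall Wsp : {vspace vT}, (forall U, X U -> (U <= Wsp)%VS) -> Wsp = fullv.

Definition perp_decomposition (vT : vectType k) (W : zmodType)
  (b : vT -> vT -> W) (X : {vspace vT} -> Prop) :=
  [/\ (forall U U', X U -> X U' -> U <> U' ->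
         forall u v, u \in U -> v \in U' -> b u v = 0),
      generates X &
      forall Y, (forall U, Y U -> X U) -> (exists U, X U /\ ~ Y U) -> ~ generates Y].

Definition perp_indecomposable (vT : vectType k) (W : zmodType) (b : vT -> vT -> W) :=
  forall X, perp_decomposition b X -> forall U, X U <-> U = fullv.

End Defs.

(** Pairing against [1 (+) 0] forces an adjointable [f] to act on [V] by a
    scalar, and pairing two independent vectors of [V] (this is where
    [dim V > 1] enters) kills its [V -> k] block.  So [Adj b] consists of the
    matrices [[a, h; 0, c]], whose adjoint [[c, -h; 0, a]] is unique because [b]
    is non-degenerate.  The two diagonal entries are characters of [Adj b] whose
    kernels are maximal left ideals, and [[0, h; 0, 0]] is a square-zero left
    ideal, hence lies in every maximal left ideal: together these pin down the
    radical.  In an orthogonal decomposition, a member containing a vector with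
    non-zero [k]-component absorbs every other member, so it is the whole space;
    by non-degeneracy every other member is then zero, which the minimality of
    the decomposition forbids. *)
From HB Require Import structures.
From mathcomp Require Import all_boot all_order all_algebra.
From mathcomp Require Import ring.
From Stdlib Require Import Classical.
Set Implicit Arguments. Unset Strict Implicit. Unset Printing Implicit Defensive.
Import GRing.Theory.
Local Open Scope ring_scope.

Section LeftIdeals.
Variables (k : fieldType) (m : nat) (A : 'M[k]_m -> Prop).
Hypothesis AB : forall x y, A x -> A y -> A (x - y).

Lemma quasi_regular_left_ideal_sub_maximal (N I : 'M[k]_m -> Prop) :
  left_ideal A N ->
  (forall x, N x -> exists u, A u /\ u *m (1%:M - x) = 1%:M) ->
  maximal_left_ideal A I -> forall x, N x -> I x.
Proof.
move=> [NA N0 NB NM] qregN [[IA I0 IB IM] I1 Imax].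
pose J z := exists y x, [/\ I y, N x & z = y + x].
have AD x y : A x -> A y -> A (x + y).
  by move=> Ax Ay; have := AB Ax (AB (NA _ N0) Ay); rewrite sub0r opprK.
move=> z Nz; apply: (Imax J); last by exists 0, z; rewrite add0r.
- split.
  + by move=> _ [y [x [Iy Nx ->]]]; apply: AD; [apply: IA | apply: NA].
  + by exists 0, 0; rewrite addr0.
  + move=> _ _ [y [x [Iy Nx ->]]] [y' [x' [Iy' Nx' ->]]].
    exists (y - y'), (x - x'); split; [exact: IB | exact: NB |].
    by rewrite opprD addrACA.
  + move=> a _ Aa [y [x [Iy Nx ->]]].
    by exists (a *m y), (a *m x); rewrite mulmxDr; split; [apply: IM | apply: NM |].
- move=> [y [x [Iy Nx e1]]]; have [u [Au u1]] := qregN x Nx.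
  have yE : y = 1%:M - x by rewrite e1 addrK.
  by apply: I1; rewrite -u1 -yE; apply: IM.
- by move=> y Iy; exists y, 0; rewrite addr0.
Qed.

Variable chi : 'M[k]_m -> k.
Hypotheses (A1 : A 1%:M) (AM : forall x y, A x -> A y -> A (x *m y)).
Hypotheses (chi1 : chi 1%:M = 1)
  (chiB : forall x y, A x -> A y -> chi (x - y) = chi x - chi y)
  (chiM : forall x y, A x -> A y -> chi (x *m y) = chi x * chi y)
  (chi_surj : forall t, exists x, A x /\ chi x = t).

Let A0 : A 0. Proof. by rewrite -(subrr 1%:M); apply: AB. Qed.
Let chi0 : chi 0 = 0. Proof. by rewrite -(subrr 1%:M) chiB ?subrr. Qed.

Lemma maximal_left_ideal_ker : maximal_left_ideal A (fun x => A x /\ chi x = 0).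
Proof.
split.
- split=> [x [] // | | x y [Ax cx] [Ay cy] | a x Aa [Ax cx]].
  + exact: conj A0 chi0.
  + by split; [apply: AB | rewrite chiB // cx cy subrr].
  + by split; [apply: AM | rewrite chiM // cx mulr0].
- by rewrite chi1 => -[_ /eqP]; rewrite oner_eq0.
- move=> J [JA J0 JB JM] J1 subJ x Jx.
  have Ax := JA x Jx; have [cx0|cx] := eqVneq (chi x) 0; first by split.
  have [a [Aa ca]] := chi_surj (chi x)^-1.
  have Aax : A (a *m x) by apply: AM.
  have Kax1 : J (a *m x - 1%:M).
    by apply: subJ; split; [apply: AB | rewrite chiB // chiM // ca mulVf // chi1 subrr].
  by case: J1; rewrite -(subKr (a *m x) 1%:M); apply: JB => //; apply: JM.
Qed.

End LeftIdeals.

Section AdjointAlgebra.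
Variables (k : fieldType) (n : nat).
Implicit Types (a c : k) (h : 'rV[k]_n).

Definition trimx a c h : 'M[k]_(1 + n) := block_mx a%:M h 0 c%:M.

Lemma bmap_row_mx (l l' : 'rV[k]_1) (r r' : 'rV[k]_n) :
  bmap (row_mx l r) (row_mx l' r') = l 0 0 *: r' - l' 0 0 *: r.
Proof. by rewrite /bmap !row_mxKl !row_mxKr. Qed.

Lemma bmapB (u v v' : 'rV[k]_(1 + n)) : bmap u (v - v') = bmap u v - bmap u v'.
Proof. by apply/rowP => j; rewrite /bmap !mxE; ring. Qed.

Lemma mul_row_trimx (l : 'rV[k]_1) (r : 'rV[k]_n) a c h :
  row_mx l r *m trimx a c h = row_mx (a *: l) (l 0 0 *: h + c *: r).
Proof.
rewrite mul_row_block mulmx0 addr0 !mul_mx_scalar.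
by rewrite [l *m h](_ : _ = l 0 0 *: h) // {1}(mx11_scalar l) mul_scalar_mx.
Qed.

Lemma trimx_adjoint a c h : adjoint_pair (@bmap k n) (trimx a c h) (trimx c a (- h)).
Proof.
move=> u v; rewrite -[u]hsubmxK -[v]hsubmxK !mul_row_trimx !bmap_row_mx.
by apply/rowP => j; rewrite !mxE; ring.
Qed.

Lemma trimxD a c h a' c' h' :
  trimx a c h + trimx a' c' h' = trimx (a + a') (c + c') (h + h').
Proof. by rewrite /trimx add_block_mx addr0 -!raddfD. Qed.

Lemma trimxN a c h : - trimx a c h = trimx (- a) (- c) (- h).
Proof. by rewrite /trimx opp_block_mx oppr0 -!raddfN. Qed.

Lemma trimxB a c h a' c' h' :
  trimx a c h - trimx a' c' h' = trimx (a - a') (c - c') (h - h').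
Proof. by rewrite trimxN trimxD. Qed.

Lemma mul_trimx a c h a' c' h' :
  trimx a c h *m trimx a' c' h' = trimx (a * a') (c * c') (a *: h' + c' *: h).
Proof.
rewrite mulmx_block !mulmx0 !mul0mx !addr0 add0r !mul_scalar_mx mul_mx_scalar.
by rewrite !scale_scalar_mx.
Qed.

Lemma trimx1 : 1%:M = trimx 1 1 0.
Proof. by rewrite /trimx -scalar_mx_block. Qed.

Lemma trimx0 : 0 = trimx 0 0 0.
Proof. by rewrite /trimx !raddf0 block_mx0. Qed.

Definition diag_pair (i0 : 'I_n) (f : 'M[k]_(1 + n)) : k * k :=
  (f (lshift n 0) (lshift n 0), f (rshift 1 i0) (rshift 1 i0)).

Lemma diag_pair_trimx i0 a c h : diag_pair i0 (trimx a c h) = (a, c).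
Proof. by rewrite /diag_pair block_mxEul block_mxEdr !mxE !eqxx !mulr1n. Qed.

Lemma bmap_nondeg (w : 'rV[k]_(1 + n)) : (0 < n)%N ->
  (forall u, bmap u w = 0) -> w = 0.
Proof.
move=> n_gt0 bw0; pose i0 := Ordinal n_gt0; rewrite -[w]hsubmxK.
have -> : rsubmx w = 0.
  by have := bw0 (row_mx 1 0); rewrite /bmap row_mxKl row_mxKr scaler0 subr0 mxE scale1r.
have := bw0 (row_mx 0 'e_i0); rewrite /bmap row_mxKl row_mxKr => /rowP /(_ i0).
rewrite !mxE !eqxx /= mulr1 mul0r sub0r => /eqP; rewrite oppr_eq0 => /eqP l0.
by rewrite (mx11_scalar (lsubmx w)) [lsubmx w 0 0]mxE l0 raddf0 row_mx0.
Qed.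

Lemma adjoint_unique (f g g' : 'M[k]_(1 + n)) : (0 < n)%N ->
  adjoint_pair (@bmap k n) f g -> adjoint_pair (@bmap k n) f g' -> g = g'.
Proof.
move=> n_gt0 fg fg'; apply/row_matrixP => i; rewrite !rowE; apply/eqP.
by rewrite -subr_eq0; apply/eqP/(bmap_nondeg n_gt0) => u; rewrite bmapB -fg -fg' subrr.
Qed.

Lemma exists_ord_neq (i : 'I_n) : (1 < n)%N -> exists j : 'I_n, j != i.
Proof.
move=> n_gt1; have n_gt0 := ltn_trans (ltn0Sn 0) n_gt1.
have [ei|] := eqVneq i (Ordinal n_gt0); last by exists (Ordinal n_gt0); rewrite eq_sym.
by exists (Ordinal n_gt1); rewrite ei; apply/eqP => /(congr1 val).
Qed.

Lemma adjoint_pair_trimx (f g : 'M[k]_(1 + n)) : (1 < n)%N ->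
  adjoint_pair (@bmap k n) f g -> exists a c h, f = trimx a c h.
Proof.
move=> n_gt1 fg; rewrite -[f]submxK -[g]submxK in fg *.
have scalarD : forall r : 'rV_n, r *m drsubmx f = ulsubmx g 0 0 *: r.
  move=> r; have := fg (row_mx 0 r) (row_mx 1 0).
  rewrite !mul_row_block !bmap_row_mx !mul0mx !mul1mx !add0r !addr0 => /rowP E.
  apply/rowP => j; have := E j; rewrite !mxE /= mulr0 mul1r mul0r !sub0r.
  by move/eqP; rewrite eqr_opp => /eqP.
have zeroC : forall i : 'I_n, dlsubmx f i 0 = 0.
  move=> i; have [j ji] := exists_ord_neq i n_gt1.
  have := fg (row_mx 0 'e_i) (row_mx 0 'e_j).
  rewrite !mul_row_block !mul0mx !add0r !bmap_row_mx -!rowE => /rowP /(_ j).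
  by rewrite !mxE !eqxx (negbTE ji) /= mulr1 !mul0r !mulr0 !subr0.
exists (ulsubmx f 0 0), (ulsubmx g 0 0), (ursubmx f); congr block_mx.
- exact: mx11_scalar.
- by apply/colP => i; rewrite [RHS]mxE zeroC.
- by apply/row_matrixP => i; rewrite !rowE scalarD mul_mx_scalar.
Qed.

Lemma Adj_trimx a c h : Adj (@bmap k n) (trimx a c h).
Proof. by exists (trimx c a (- h)); apply: trimx_adjoint. Qed.

Lemma AdjE (f : 'M[k]_(1 + n)) : (1 < n)%N ->
  Adj (@bmap k n) f <-> exists a c h, f = trimx a c h.
Proof.
move=> n_gt1; split; first by case=> g; apply: adjoint_pair_trimx.
by case=> a [c [h ->]]; apply: Adj_trimx.
Qed.

End AdjointAlgebra.

Section JacobsonRadical.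
Variables (k : fieldType) (n : nat) (i0 : 'I_n).
Hypothesis n_gt1 : (1 < n)%N.
Let A := Adj (@bmap k n).

Lemma AdjB f g : A f -> A g -> A (f - g).
Proof.
by move=> /(AdjE _ n_gt1) [a [c [h ->]]] /(AdjE _ n_gt1) [a' [c' [h' ->]]];
  rewrite trimxB; apply: Adj_trimx.
Qed.

Lemma diag_pairM f g : A f -> A g ->
  diag_pair i0 (f *m g) = ((diag_pair i0 f).1 * (diag_pair i0 g).1,
                           (diag_pair i0 f).2 * (diag_pair i0 g).2).
Proof.
by move=> /(AdjE _ n_gt1) [a [c [h ->]]] /(AdjE _ n_gt1) [a' [c' [h' ->]]];
  rewrite mul_trimx !diag_pair_trimx.
Qed.

Lemma maximal_left_ideal_diag (s : bool) :
  let chi f := if s then (diag_pair i0 f).1 else (diag_pair i0 f).2 in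
  maximal_left_ideal A (fun f => A f /\ chi f = 0).
Proof.
move=> chi; apply: maximal_left_ideal_ker.
- exact: AdjB.
- by rewrite trimx1; apply: Adj_trimx.
- by move=> f g /(AdjE _ n_gt1) [a [c [h ->]]] /(AdjE _ n_gt1) [a' [c' [h' ->]]];
    rewrite mul_trimx; apply: Adj_trimx.
- by rewrite /chi trimx1 diag_pair_trimx; case: (s).
- by move=> f g _ _; rewrite /chi /diag_pair !mxE; case: (s).
- by move=> f g Af Ag; rewrite /chi diag_pairM //; case: (s).
- move=> t; exists (trimx t t 0); split; first exact: Adj_trimx.
  by rewrite /chi diag_pair_trimx; case: (s).
Qed.

Lemma jacobson_radE f : jacobson_rad A f <-> exists h, f = trimx 0 0 h.
Proof.
split.
- case=> /(AdjE _ n_gt1) [a [c [h ->]]] radf; exists h.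
  have [_ a0] := radf _ (maximal_left_ideal_diag true).
  have [_ c0] := radf _ (maximal_left_ideal_diag false).
  by move: a0 c0; rewrite diag_pair_trimx /= => -> ->.
- case=> h ->; split; first exact: Adj_trimx.
  move=> I maxI; pose N (x : 'M[k]_(1 + n)) := exists h' : 'rV[k]_n, x = trimx 0 0 h'.
  apply: (quasi_regular_left_ideal_sub_maximal (N := N) AdjB _ _ maxI); last by exists h.
  + split.
    * by move=> _ [h' ->]; apply: Adj_trimx.
    * by exists 0; rewrite -trimx0.
    * by move=> _ _ [x ->] [y ->]; exists (x - y); rewrite trimxB subr0.
    * move=> _ _ /(AdjE _ n_gt1) [a [c [h1 ->]]] [h' ->].
      by exists (a *: h' + 0 *: h1); rewrite mul_trimx !mulr0.
  + move=> _ [h' ->]; exists (trimx 1 1 h'); split; first exact: Adj_trimx.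
    by rewrite trimx1 trimxB mul_trimx !subr0 !mulr1 !scale1r sub0r addNr.
Qed.

End JacobsonRadical.

Section PerpIndecomposable.
Variables (k : fieldType) (n : nat).
Let b := @bmap k n.

Lemma orthogonal_memv (u w : 'rV[k]_(1 + n)) :
  lsubmx u 0 0 != 0 -> b u w = 0 -> w \in <[u]>%VS.
Proof.
move=> u0 buw; apply/vlineP; exists (lsubmx w 0 0 / lsubmx u 0 0).
set t := _ / _; rewrite -[w]hsubmxK -[t *: u]hsubmxK !linearZ /=; congr row_mx.
  by apply/rowP => j; rewrite ord1 /t [RHS]mxE divfK.
apply: (scalerI u0); rewrite scalerA mulrCA divff // mulr1.
by apply/eqP; rewrite -subr_eq0 -buw.
Qed.

Definition hyperplane_V : {vspace 'rV[k]_(1 + n)} := lker (linfun (@lsubmx k 1 1 n)).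

Lemma hyperplane_V_neq_full : hyperplane_V != fullv.
Proof.
apply/eqP => HV; have := memvf (row_mx (1 : 'rV[k]_1) (0 : 'rV[k]_n)).
rewrite -HV memv_ker lfunE /= row_mxKl => /eqP /rowP /(_ 0).
by rewrite !mxE => /eqP; rewrite oner_eq0.
Qed.

Lemma vspace0_neq_full : (0%VS : {vspace 'rV[k]_(1 + n)}) != fullv.
Proof.
apply/eqP => V0; move/eqP: hyperplane_V_neq_full; apply.
by apply/eqP; rewrite eqEsubv subvf -V0 sub0v.
Qed.

Lemma perp_decomposition_full X :
  perp_decomposition b X -> X fullv.
Proof.
case=> orth gen _.
have [U XU UV] : exists2 U, X U & ~~ (U <= hyperplane_V)%VS.
  apply: NNPP => nex; move/eqP: hyperplane_V_neq_full; apply; apply: gen => U XU.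
  by apply/negPn/negP => UV; apply: nex; exists U.
have [u uU] := subvPn UV; rewrite memv_ker lfunE /= => u0.
have u00 : lsubmx u 0 0 != 0.
  by apply: contra u0 => /eqP u00; apply/eqP/rowP => j; rewrite ord1 u00 mxE.
suff <- : U = fullv by [].
apply: gen => U' XU'; have [-> // |U'U] := eqVneq U' U.
have UU' : U <> U' by move=> E; rewrite E eqxx in U'U.
apply/subvP => w wU'; apply: subvP (_ : <[u]> <= U)%VS _ _; first by rewrite -memvE.
exact: orthogonal_memv u00 (orth _ _ XU XU' UU' _ _ uU wU').
Qed.

Lemma bmap_perp_indecomposable : (0 < n)%N -> perp_indecomposable b.
Proof.
move=> n_gt0 X decX U; split; last by move->; apply: perp_decomposition_full decX.
move=> XU; have Xf := perp_decomposition_full decX; case: decX => orth _ minX.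
have [// | Uf] := eqVneq U fullv; exfalso.
have U0 : U = 0%VS.
  apply/eqP; rewrite -subv0; apply/subvP => w wU; rewrite memv0; apply/eqP.
  apply: (bmap_nondeg n_gt0) => u; apply: orth Xf XU _ _ _ (memvf u) wU.
  by move=> E; rewrite -E eqxx in Uf.
apply: (minX (fun V => V = fullv)) => [V -> // | | W sW].
  by exists U; split => //; rewrite U0; apply/eqP; exact: vspace0_neq_full.
by apply/eqP; rewrite eqEsubv subvf sW.
Qed.

End PerpIndecomposable.

Theorem lemma7p13 (k : fieldType) (n : nat) (hn : (1 < n)%N) :
  let b := @bmap k n in
  let M := fun (a c : k) (h : 'M[k]_(1, n)) =>
             (block_mx (a%:M : 'M[k]_1) h 0 (c%:M : 'M[k]_n) : 'M[k]_(1 + n)) in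
  alternating b /\
      (forall f, Adj b f <-> exists a c h, f = M a c h) /\
      (forall a c h g, adjoint_pair b (M a c h) g <-> g = M c a (- h)) /\
      (forall f, jacobson_rad (Adj b) f <-> exists h, f = M 0 0 h) /\
      (exists phi : 'M[k]_(1 + n) -> k * k,
         (forall f g, Adj b f -> Adj b g ->
               phi (f + g) = ((phi f).1 + (phi g).1, (phi f).2 + (phi g).2)) /\
         (forall (c : k) f, Adj b f -> phi (c *: f) = (c * (phi f).1, c * (phi f).2)) /\
         (forall f g, Adj b f -> Adj b g ->
               phi (f *m g) = ((phi f).1 * (phi g).1, (phi f).2 * (phi g).2)) /\
         phi 1%:M = (1, 1) /\
         (forall p, exists f, Adj b f /\ phi f = p) /\
         (forall f, Adj b f -> (phi f = (0, 0) <-> jacobson_rad (Adj b) f)) /\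
         (forall f g, adjoint_pair b f g -> phi g = ((phi f).2, (phi f).1))) /\
      perp_indecomposable b.
Proof.
move=> b M; have n_gt0 := ltn_trans (ltn0Sn 0) hn; pose i0 := Ordinal n_gt0.
split; first by move=> u; rewrite /b /bmap subrr.
split; first by move=> f; apply: AdjE.
split.
  move=> a c h g; split; last by move->; apply: trimx_adjoint.
  by move/(adjoint_unique n_gt0); apply; apply: trimx_adjoint.
split; first exact: jacobson_radE.
split; last exact: bmap_perp_indecomposable n_gt0.
exists (diag_pair i0); split; first by move=> f g _ _; rewrite /diag_pair !mxE.
split; first by move=> x f _; rewrite /diag_pair !mxE.
split; first exact: diag_pairM.
split; first by rewrite trimx1 diag_pair_trimx.
split.
  by case=> x y; exists (trimx x y 0); rewrite diag_pair_trimx; split=> //; apply: Adj_trimx.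
split.
  move=> f /(AdjE _ hn) [a [c [h ->]]]; rewrite jacobson_radE // diag_pair_trimx.
  split=> [[-> ->] | [h' /(congr1 (diag_pair i0))]]; first by exists h.
  by rewrite !diag_pair_trimx.
move=> f g fg; have [a [c [h ef]]] := adjoint_pair_trimx hn fg; rewrite ef in fg *.
by rewrite (adjoint_unique n_gt0 fg (trimx_adjoint a c h)) !diag_pair_trimx.
Qed.
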